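(* There exist constants $C\ge2$, $K$ and $M$ such that for all integers $k,k'$ with $K\le k<k'\le2k$, every $t_1\ge0$ and every $c_1>0$, setting $c=e^{-k/2+5k'/6}$ and defining $c_2>0$ by $c_1\,c\,e^{-kt_1}=c_2e^{-k't_1}$, one can transform $c_1\cos(kx)e^{-kt}$ into $c_2\cos(k'y)e^{-k't}$ within $\mathbb{T}^2\times[t_1,t_1+C]$ via a solution $u$ of $\ddot u+\operatorname{div}(A\nabla u)=0$ with $A$ in the regularity class $R(80,60)$. Moreover, on $[t_1,t_1+C]$, $u=f(t)\cos(kx)+g(t)\cos(k'y)$ with $f,g\in C^2$ satisfying, for $0\le\alpha\le2$, $$|f^{(\alpha)}(t)|\le Mc_1k^{7\alpha/3}e^{-kt},\qquad |g^{(\alpha)}(t)|\le Mc_2(k')^\alpha e^{-k't/3}e^{-2k't_1/3};$$ on $[t_1,t_1+\frac1{100}]$, $u=c_1\cos(kx)e^{-kt}$ and $A=\mathrm{Id}$; and on $[t_1+C-\frac1{100},t_1+C]$, $u=c_2\cos(k'y)e^{-k't}$ and $A=\mathrm{Id}$.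
   Context: $\mathbb{T}^2=(\mathbb{R}/2\pi\mathbb{Z})^2$ with coordinates $(x,y)$; $t$ the third coordinate. $\ddot u+\operatorname{div}(A\nabla u)$ means $\partial_t^2u+\sum_{i,j\in\{x,y\}}\partial_i(A_{ij}\partial_ju)$ for a real $2\times2$ matrix function $A$. ''Transform $u_1$ into $u_2$ within $\mathbb{T}^2\times[T_1,T_2]$ via $u$'' means: $u$ is $C^2$, $A$ is $C^1$, $\ddot u+\operatorname{div}(A\nabla u)=0$ on $\mathbb{T}^2\times\mathbb{R}$, $u=u_1$ and $A=\mathrm{Id}$ (the equation solved by $u_1$) for $t\le T_1$, and $u=u_2$, $A=\mathrm{Id}$ for $t\ge T_2$. Regularity class $R(\Lambda,C)$: $\Lambda^{-1}|\xi|^2\le\xi^TA\xi\le\Lambda|\xi|^2$ for all $\xi\in\mathbb{R}^2$ at every point, and the entries of $A$ are $C^1$ with all first partial derivatives in $x,y,t$ bounded by $C$ in absolute value. *)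

From Stdlib Require Import Reals.
From Coquelicot Require Import Coquelicot.
Open Scope R_scope.

(* Scalar fields on T^2 x R, written as functions of (x, y, t) : R^3,
   required to be 2*pi-periodic in x and y. *)
Definition field3 := R -> R -> R -> R.

Definition periodic_xy (f : field3) : Prop :=
  forall x y t, f (x + 2 * PI) y t = f x y t /\ f x (y + 2 * PI) t = f x y t.

Definition dx (f : field3) : field3 := fun x y t => Derive (fun x' => f x' y t) x.
Definition dy (f : field3) : field3 := fun x y t => Derive (fun y' => f x y' t) y.
Definition dt (f : field3) : field3 := fun x y t => Derive (fun t' => f x y t') t.

Definition cont3 (f : field3) : Prop :=
  forall p : R * R * R,
    continuous (fun q : R * R * R => f (fst (fst q)) (snd (fst q)) (snd q)) p.

Definition C1_3 (f : field3) : Prop :=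
  (forall x y t, ex_derive (fun x' => f x' y t) x /\
                 ex_derive (fun y' => f x y' t) y /\
                 ex_derive (fun t' => f x y t') t) /\
  cont3 f /\ cont3 (dx f) /\ cont3 (dy f) /\ cont3 (dt f).

Definition C2_3 (f : field3) : Prop :=
  C1_3 f /\ C1_3 (dx f) /\ C1_3 (dy f) /\ C1_3 (dt f).

Record matfield := MatField {
  a11 : field3; a12 : field3; a21 : field3; a22 : field3 }.

Definition mat_periodic (A : matfield) : Prop :=
  periodic_xy (a11 A) /\ periodic_xy (a12 A) /\
  periodic_xy (a21 A) /\ periodic_xy (a22 A).

Definition mat_C1 (A : matfield) : Prop :=
  C1_3 (a11 A) /\ C1_3 (a12 A) /\ C1_3 (a21 A) /\ C1_3 (a22 A).

Definition is_Id_at (A : matfield) (x y t : R) : Prop :=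
  a11 A x y t = 1 /\ a12 A x y t = 0 /\ a21 A x y t = 0 /\ a22 A x y t = 1.

Definition solves_eq (A : matfield) (u : field3) : Prop :=
  forall x y t,
    dt (dt u) x y t
    + dx (fun x y t => a11 A x y t * dx u x y t + a12 A x y t * dy u x y t) x y t
    + dy (fun x y t => a21 A x y t * dx u x y t + a22 A x y t * dy u x y t) x y t
    = 0.

(* "transform u1 into u2 within T^2 x [T1,T2] via u (with coefficient A)",
   where u1, u2 solve the equation with A = Id. *)
Definition transforms (u1 u2 : field3) (T1 T2 : R) (A : matfield) (u : field3) : Prop :=
  periodic_xy u /\ mat_periodic A /\
  C2_3 u /\ mat_C1 A /\ solves_eq A u /\
  (forall x y t, t <= T1 -> u x y t = u1 x y t /\ is_Id_at A x y t) /\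
  (forall x y t, T2 <= t -> u x y t = u2 x y t /\ is_Id_at A x y t).

Definition quad (A : matfield) (x y t xi1 xi2 : R) : R :=
  xi1 * (a11 A x y t * xi1 + a12 A x y t * xi2)
  + xi2 * (a21 A x y t * xi1 + a22 A x y t * xi2).

Definition bounded_partials (f : field3) (Cb : R) : Prop :=
  forall x y t, Rabs (dx f x y t) <= Cb /\ Rabs (dy f x y t) <= Cb /\
                Rabs (dt f x y t) <= Cb.

Definition reg_class (Lam Cb : R) (A : matfield) : Prop :=
  (forall x y t xi1 xi2,
      / Lam * (xi1 ^ 2 + xi2 ^ 2) <= quad A x y t xi1 xi2 /\
      quad A x y t xi1 xi2 <= Lam * (xi1 ^ 2 + xi2 ^ 2)) /\
  mat_C1 A /\
  bounded_partials (a11 A) Cb /\ bounded_partials (a12 A) Cb /\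
  bounded_partials (a21 A) Cb /\ bounded_partials (a22 A) Cb.

Definition C2_1 (f : R -> R) : Prop :=
  (forall t, ex_derive f t) /\ (forall t, ex_derive (Derive f) t) /\
  (forall t, continuous (Derive_n f 2) t).

From Stdlib Require Import Reals Lra Psatz ZArith.
From Coquelicot Require Import Coquelicot.
Open Scope R_scope.

(* The transition consists of two Fourier modes with time-dependent amplitudes,
     u = f(t) cos(k x) + g(t) cos(k' y),   (f, g) = c1 e^(-phase(t)) (cos angle(t), sin angle(t)).
   Writing s = t - t1, the angle turns from 0 to pi/2 for s in [3, 4], while phase' = k;
   afterwards phase' moves from k to k' (for s in [5, 6] and [25, 26]) through an
   intermediate rate chosen so that c1 e^(-phase) = c2 e^(-k' t) once s >= 26.
   Such (f, g) satisfy f'' = k^2 a f + W g and g'' = k'^2 d g - W f, with W = 2 k angle' - angle''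
   and a, d bounded above and below; and for an explicit matrix A, equal to diag(a, d) up to
   terms of size W/k^2 whose antisymmetric part carries W sin(kx) sin(k'y), the equation
   u_tt + div(A grad u) = 0 is equivalent to these two ODEs.  All profiles come from one
   C^3 smoothstep, so A is C^1 with bounds uniform in k, and the estimates on f, g follow
   from k'/2 <= phase' <= 3k'. *)

(** * Functions glued at 0 and 1 *)

Lemma is_derive_extension_cont (f g df dg : R -> R) (a : R) :
  (forall x, is_derive f x (df x)) -> (forall x, is_derive g x (dg x)) ->
  f a = g a -> df a = dg a ->
  forall x, is_derive (extension_cont f g a) x (extension_cont df dg a x).
Proof.
  intros Hf Hg Ea Eda x; unfold extension_cont at 2.
  destruct (Rtotal_order x a) as [Hx | [<- | Hx]].
  - destruct (Rle_dec x a); [| lra].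
    apply is_derive_ext_loc with f; [| apply Hf].
    apply (filter_imp (fun y => y < a)); [| exact (open_lt a x Hx)].
    intros y Hy; unfold extension_cont; destruct (Rle_dec y a); [easy | lra].
  - destruct (Rle_dec x x); [| lra].
    apply extension_cont_is_derive; [apply Hf | rewrite Eda; apply Hg | easy].
  - destruct (Rle_dec x a); [lra |].
    apply is_derive_ext_loc with g; [| apply Hg].
    apply (filter_imp (fun y => a < y)); [| exact (open_gt a x Hx)].
    intros y Hy; unfold extension_cont; destruct (Rle_dec y a); [lra | easy].
Qed.

Lemma continuous_extension_cont (f g : R -> R) (a : R) :
  (forall x, continuous f x) -> (forall x, continuous g x) ->
  f a = g a -> forall x, continuous (extension_cont f g a) x.
Proof.
  intros Hf Hg Ea x.
  destruct (Rtotal_order x a) as [Hx | [-> | Hx]].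
  - apply continuous_ext_loc with f; [| apply Hf].
    apply (filter_imp (fun y => y < a)); [| exact (open_lt a x Hx)].
    intros y Hy; unfold extension_cont; destruct (Rle_dec y a); [easy | lra].
  - apply extension_cont_continuous; auto.
  - apply continuous_ext_loc with g; [| apply Hg].
    apply (filter_imp (fun y => a < y)); [| exact (open_gt a x Hx)].
    intros y Hy; unfold extension_cont; destruct (Rle_dec y a); [lra | easy].
Qed.

Definition glue01 (l p r : R -> R) : R -> R :=
  extension_cont l (extension_cont p r 1) 0.

Lemma is_derive_glue01 (l p r dl dp dr : R -> R) :
  (forall x, is_derive l x (dl x)) -> (forall x, is_derive p x (dp x)) ->
  (forall x, is_derive r x (dr x)) ->
  l 0 = p 0 -> dl 0 = dp 0 -> p 1 = r 1 -> dp 1 = dr 1 ->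
  forall x, is_derive (glue01 l p r) x (glue01 dl dp dr x).
Proof.
  intros Hl Hp Hr E0 dE0 E1 dE1.
  apply is_derive_extension_cont; [easy | | |];
    try (unfold extension_cont; destruct (Rle_dec 0 1); [easy | lra]).
  now apply is_derive_extension_cont.
Qed.

Lemma continuous_glue01 (l p r : R -> R) :
  (forall x, continuous l x) -> (forall x, continuous p x) ->
  (forall x, continuous r x) -> l 0 = p 0 -> p 1 = r 1 ->
  forall x, continuous (glue01 l p r) x.
Proof.
  intros Hl Hp Hr E0 E1.
  apply continuous_extension_cont; [easy | |].
  - now apply continuous_extension_cont.
  - unfold extension_cont; destruct (Rle_dec 0 1); [easy | lra].
Qed.

Lemma glue01_left l p r x : x <= 0 -> glue01 l p r x = l x.
Proof. intros H; unfold glue01, extension_cont; destruct (Rle_dec x 0); [easy | lra]. Qed.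

Lemma glue01_mid l p r x : 0 < x <= 1 -> glue01 l p r x = p x.
Proof.
  intros H; unfold glue01, extension_cont.
  destruct (Rle_dec x 0); [lra |]; destruct (Rle_dec x 1); [easy | lra].
Qed.

Lemma glue01_right l p r x : p 1 = r 1 -> 1 <= x -> glue01 l p r x = r x.
Proof.
  intros E H; unfold glue01, extension_cont.
  destruct (Rle_dec x 0); [lra |]; destruct (Rle_dec x 1); [| easy].
  now replace x with 1 by lra.
Qed.

Lemma continuous_R_of_ex_derive (f : R -> R) (x : R) : ex_derive f x -> continuous f x.
Proof. apply (ex_derive_continuous (K := R_AbsRing) (V := R_NormedModule)). Qed.

Lemma exp_le_compat x y : x <= y -> exp x <= exp y.
Proof. intros [H | ->]; [left; now apply exp_increasing | lra]. Qed.

Lemma Rabs_sin_le_1 x : Rabs (sin x) <= 1.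
Proof. apply Rabs_le_between, SIN_bound. Qed.
Lemma Rabs_cos_le_1 x : Rabs (cos x) <= 1.
Proof. apply Rabs_le_between, COS_bound. Qed.

Lemma Rabs_mult_le_unit2 (a s1 s2 B : R) :
  Rabs a <= B -> Rabs s1 <= 1 -> Rabs s2 <= 1 -> Rabs (a * (s1 * s2)) <= B.
Proof.
  intros Ha H1 H2; rewrite !Rabs_mult.
  pose proof (Rabs_pos a); pose proof (Rabs_pos s1); pose proof (Rabs_pos s2).
  assert (Rabs s1 * Rabs s2 <= 1) by nra; nra.
Qed.

Lemma Rabs_div_le (a b B : R) : 0 < b -> Rabs a <= B * b -> Rabs (a / b) <= B.
Proof.
  intros Hb H; unfold Rdiv; rewrite Rabs_mult, Rabs_inv, (Rabs_right b) by lra.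
  apply Rmult_le_reg_r with b; [easy |]; field_simplify; lra.
Qed.

Lemma Rabs_mult_nonneg_le (E X B : R) : 0 <= E -> Rabs X <= B -> Rabs (E * X) <= E * B.
Proof. intros HE HX; rewrite Rabs_mult, (Rabs_right E) by lra; now apply Rmult_le_compat_l. Qed.

Lemma Derive_n_of_is_derive (f f' f'' : R -> R) :
  (forall t, is_derive f t (f' t)) -> (forall t, is_derive f' t (f'' t)) ->
  forall t, Derive_n f 1 t = f' t /\ Derive_n f 2 t = f'' t.
Proof.
  intros H1 H2 t; simpl; split; [now apply is_derive_unique |].
  rewrite (Derive_ext _ f') by (intros; now apply is_derive_unique).
  now apply is_derive_unique.
Qed.

Lemma C2_1_of_is_derive (f f' f'' : R -> R) :
  (forall t, is_derive f t (f' t)) -> (forall t, is_derive f' t (f'' t)) ->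
  (forall t, continuous f'' t) -> C2_1 f.
Proof.
  intros H1 H2 H3; split; [| split]; intros t.
  - now exists (f' t).
  - apply ex_derive_ext with f'; [intros; symmetry; now apply is_derive_unique | now exists (f'' t)].
  - apply continuous_ext with f''; [| apply H3].
    intros; symmetry; now apply (Derive_n_of_is_derive f f' f'').
Qed.

(** * A C^3 smoothstep *)

(* [step] is the degree-7 smoothstep, the unique polynomial of that degree which
   goes from 0 to 1 on [0, 1] with vanishing derivatives of order 1, 2, 3 at
   both ends; glued to the constants 0 and 1 it is C^3, and [ramp] is its
   primitive vanishing on (-oo, 0]. *)
Definition step_poly (x : R) : R := 35 * x^4 - 84 * x^5 + 70 * x^6 - 20 * x^7.
Definition step_poly' (x : R) : R := 140 * x^3 - 420 * x^4 + 420 * x^5 - 140 * x^6.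
Definition step_poly'' (x : R) : R := 420 * x^2 - 1680 * x^3 + 2100 * x^4 - 840 * x^5.
Definition step_poly''' (x : R) : R := 840 * x - 5040 * x^2 + 8400 * x^3 - 4200 * x^4.
Definition ramp_poly (x : R) : R := 7 * x^5 - 14 * x^6 + 10 * x^7 - 5/2 * x^8.

Definition step : R -> R := glue01 (fun _ => 0) step_poly (fun _ => 1).
Definition step' : R -> R := glue01 (fun _ => 0) step_poly' (fun _ => 0).
Definition step'' : R -> R := glue01 (fun _ => 0) step_poly'' (fun _ => 0).
Definition step''' : R -> R := glue01 (fun _ => 0) step_poly''' (fun _ => 0).
Definition ramp : R -> R := glue01 (fun _ => 0) ramp_poly (fun x => x - 1/2).

Ltac glue01_derive :=
  apply is_derive_glue01;
  [ intros; auto_derive; auto; ring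
  | intros; unfold step_poly, step_poly', step_poly'', step_poly''', ramp_poly;
    auto_derive; auto; field
  | intros; auto_derive; auto; ring
  | .. ];
  unfold step_poly, step_poly', step_poly'', step_poly''', ramp_poly; field.

Lemma is_derive_ramp x : is_derive ramp x (step x).
Proof. glue01_derive. Qed.
Lemma is_derive_step x : is_derive step x (step' x).
Proof. glue01_derive. Qed.
Lemma is_derive_step' x : is_derive step' x (step'' x).
Proof. glue01_derive. Qed.
Lemma is_derive_step'' x : is_derive step'' x (step''' x).
Proof. glue01_derive. Qed.

Lemma continuous_step''' x : continuous step''' x.
Proof.
  apply continuous_glue01; try (intros; apply continuous_const);
    unfold step_poly'''; [| ring | ring].
  intros y; apply continuous_R_of_ex_derive; auto_derive; auto.
Qed.

Lemma step_left x : x <= 0 -> step x = 0.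
Proof. apply glue01_left. Qed.
Lemma step_right x : 1 <= x -> step x = 1.
Proof. apply glue01_right; unfold step_poly; ring. Qed.
Lemma ramp_left x : x <= 0 -> ramp x = 0.
Proof. apply glue01_left. Qed.
Lemma ramp_right x : 1 <= x -> ramp x = x - 1/2.
Proof. apply (glue01_right _ _ (fun x => x - 1/2)); unfold ramp_poly; field. Qed.

Lemma step'_out x : x <= 0 \/ 1 <= x -> step' x = 0.
Proof. intros [H | H]; [apply glue01_left | apply glue01_right]; auto; unfold step_poly'; ring. Qed.
Lemma step''_out x : x <= 0 \/ 1 <= x -> step'' x = 0.
Proof. intros [H | H]; [apply glue01_left | apply glue01_right]; auto; unfold step_poly''; ring. Qed.
Lemma step'''_out x : x <= 0 \/ 1 <= x -> step''' x = 0.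
Proof. intros [H | H]; [apply glue01_left | apply glue01_right]; auto; unfold step_poly'''; ring. Qed.

Lemma step_bounds x : 0 <= step x <= 1.
Proof.
  destruct (Rle_dec x 0). { rewrite step_left; lra. }
  destruct (Rle_dec 1 x). { rewrite step_right; lra. }
  unfold step; rewrite glue01_mid by lra; unfold step_poly.
  assert (0 <= x^4) by (apply pow_le; lra).
  assert (0 <= (1 - x)^4) by (apply pow_le; lra).
  split.
  - replace (35*x^4 - 84*x^5 + 70*x^6 - 20*x^7) with (x^4 * (35 - 84*x + 70*x^2 - 20*x^3)) by ring.
    apply Rmult_le_pos; nra.
  - assert (0 <= (1 - x)^4 * (1 + 4*x + 10*x^2 + 20*x^3)) by (apply Rmult_le_pos; nra).
    replace (35*x^4 - 84*x^5 + 70*x^6 - 20*x^7)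
      with (1 - (1 - x)^4 * (1 + 4*x + 10*x^2 + 20*x^3)) by ring.
    lra.
Qed.

Lemma step'_bounds x : 0 <= step' x <= 3.
Proof.
  destruct (Rle_dec x 0). { rewrite step'_out; lra. }
  destruct (Rle_dec 1 x). { rewrite step'_out; lra. }
  unfold step'; rewrite glue01_mid by lra; unfold step_poly'.
  assert (0 < x < 1) by lra.
  replace (140*x^3 - 420*x^4 + 420*x^5 - 140*x^6) with (140 * (x * (1 - x))^3) by ring.
  assert (0 <= x * (1 - x) <= 1/4) by (pose proof (pow2_ge_0 (x - 1/2)); split; nra).
  assert (0 <= (x * (1 - x))^3 <= (1/4)^3) by (split; [apply pow_le | apply pow_incr]; lra).
  lra.
Qed.

Lemma step''_bound x : Rabs (step'' x) <= 30.
Proof.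
  apply Rabs_le_between.
  destruct (Rle_dec x 0). { rewrite step''_out; lra. }
  destruct (Rle_dec 1 x). { rewrite step''_out; lra. }
  unfold step''; rewrite glue01_mid by lra; unfold step_poly''.
  assert (0 < x < 1) by lra.
  replace (420*x^2 - 1680*x^3 + 2100*x^4 - 840*x^5) with (420 * (x * (1 - x))^2 * (1 - 2*x)) by ring.
  assert (0 <= x * (1 - x) <= 1/4) by (pose proof (pow2_ge_0 (x - 1/2)); split; nra).
  assert (0 <= (x * (1 - x))^2 <= (1/4)^2) by (split; [apply pow_le | apply pow_incr]; lra).
  split; nra.
Qed.

Lemma step'''_bound x : Rabs (step''' x) <= 20000.
Proof.
  apply Rabs_le_between.
  destruct (Rle_dec x 0). { rewrite step'''_out; lra. }
  destruct (Rle_dec 1 x). { rewrite step'''_out; lra. }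
  unfold step'''; rewrite glue01_mid by lra; unfold step_poly'''.
  assert (0 < x < 1) by lra.
  assert (0 <= x^2 <= 1) by (split; nra).
  assert (0 <= x^3 <= 1) by (split; nra).
  assert (0 <= x^4 <= 1) by (split; nra).
  lra.
Qed.

Lemma cont3_ext (F G : field3) :
  (forall x y t, F x y t = G x y t) -> cont3 G -> cont3 F.
Proof. intros E H p; eapply continuous_ext; [| apply H]; intros q; simpl; now rewrite E. Qed.

Lemma cont3_const (c : R) : cont3 (fun _ _ _ => c).
Proof. intros p; apply continuous_const. Qed.

Lemma cont3_x (h : R -> R) : (forall x, continuous h x) -> cont3 (fun x _ _ => h x).
Proof.
  intros H [[x y] t]; apply continuous_comp with (g := h); [| apply H].
  apply continuous_comp with (f := fst) (g := fst); [apply continuous_fst | apply continuous_fst].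
Qed.

Lemma cont3_y (h : R -> R) : (forall y, continuous h y) -> cont3 (fun _ y _ => h y).
Proof.
  intros H [[x y] t]; apply continuous_comp with (g := h); [| apply H].
  apply continuous_comp with (f := fst) (g := snd); [apply continuous_fst | apply continuous_snd].
Qed.

Lemma cont3_t (h : R -> R) : (forall t, continuous h t) -> cont3 (fun _ _ t => h t).
Proof. intros H [[x y] t]; apply continuous_comp with (g := h); [apply continuous_snd | apply H]. Qed.

Lemma cont3_plus (F G : field3) :
  cont3 F -> cont3 G -> cont3 (fun x y t => F x y t + G x y t).
Proof. intros HF HG p; apply (continuous_plus (V := R_NormedModule)); [apply HF | apply HG]. Qed.

Lemma cont3_mult (F G : field3) :
  cont3 F -> cont3 G -> cont3 (fun x y t => F x y t * G x y t).
Proof. intros HF HG p; apply (continuous_mult (K := R_AbsRing)); [apply HF | apply HG]. Qed.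

Lemma cont3_opp (F : field3) : cont3 F -> cont3 (fun x y t => - F x y t).
Proof.
  intros HF; apply cont3_ext with (fun x y t => -1 * F x y t); [intros; ring |].
  apply cont3_mult; [apply cont3_const | easy].
Qed.

Lemma cont3_minus (F G : field3) :
  cont3 F -> cont3 G -> cont3 (fun x y t => F x y t - G x y t).
Proof. intros HF HG; apply cont3_plus; [easy | now apply cont3_opp]. Qed.

Definition C1_with (F Fx Fy Ft : field3) : Prop :=
  (forall x y t, is_derive (fun x' => F x' y t) x (Fx x y t) /\
                 is_derive (fun y' => F x y' t) y (Fy x y t) /\
                 is_derive (fun t' => F x y t') t (Ft x y t)) /\
  cont3 F /\ cont3 Fx /\ cont3 Fy /\ cont3 Ft.

Section C1_with.
Variables F Fx Fy Ft : field3.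
Hypothesis HF : C1_with F Fx Fy Ft.

Lemma C1_with_dx x y t : dx F x y t = Fx x y t.
Proof. apply is_derive_unique, HF. Qed.
Lemma C1_with_dy x y t : dy F x y t = Fy x y t.
Proof. apply is_derive_unique, HF. Qed.
Lemma C1_with_dt x y t : dt F x y t = Ft x y t.
Proof. apply is_derive_unique, HF. Qed.

Lemma C1_with_C1_3 : C1_3 F.
Proof.
  destruct HF as [D [cF [cx [cy ct]]]]; split.
  - intros x y t; destruct (D x y t) as [Dx [Dy Dt]].
    split; [| split]; eexists; eassumption.
  - split; [easy |]; split; [| split].
    + exact (cont3_ext _ _ C1_with_dx cx).
    + exact (cont3_ext _ _ C1_with_dy cy).
    + exact (cont3_ext _ _ C1_with_dt ct).
Qed.

Lemma C1_with_ext G : (forall x y t, G x y t = F x y t) -> C1_with G Fx Fy Ft.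
Proof.
  intros E; destruct HF as [D [cF cD]]; split; [| split; [eapply cont3_ext; eauto | easy]].
  intros x y t; destruct (D x y t) as [Dx [Dy Dt]].
  split; [| split]; eapply is_derive_ext; try eassumption; intros; simpl; now rewrite E.
Qed.
End C1_with.

Lemma dx_ext (F G : field3) : (forall x y t, F x y t = G x y t) -> forall x y t, dx F x y t = dx G x y t.
Proof. intros E x y t; apply Derive_ext; intros; apply E. Qed.
Lemma dy_ext (F G : field3) : (forall x y t, F x y t = G x y t) -> forall x y t, dy F x y t = dy G x y t.
Proof. intros E x y t; apply Derive_ext; intros; apply E. Qed.
Lemma dt_ext (F G : field3) : (forall x y t, F x y t = G x y t) -> forall x y t, dt F x y t = dt G x y t.
Proof. intros E x y t; apply Derive_ext; intros; apply E. Qed.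

Create HintDb derive.
#[export] Hint Resolve is_derive_ramp is_derive_step is_derive_step' is_derive_step'' : derive.
#[export] Hint Extern 1 (ex_derive _ _) => eexists; solve [eauto with derive] : derive.

Ltac derive_rw := repeat match goal with
  | |- context [Derive ?F ?x] => erewrite (is_derive_unique F x) by eauto with derive
  end.
Ltac solve_derive :=
  auto_derive; [repeat split; auto with derive | derive_rw; unfold Rminus; first [ring | field; auto]].

(** * The transition *)

Section Construction.
Variables k k' t1 : R.

Definition mid_rate : R := 37/30 * k' - k/4.

Definition phase (t : R) : R := k * t + (mid_rate - k) * ramp (t - t1 - 5)
  + (k' - mid_rate) * ramp (t - t1 - 25).
Definition phase' (t : R) : R := k + (mid_rate - k) * step (t - t1 - 5)
  + (k' - mid_rate) * step (t - t1 - 25).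
Definition phase'' (t : R) : R := (mid_rate - k) * step' (t - t1 - 5)
  + (k' - mid_rate) * step' (t - t1 - 25).
Definition phase''' (t : R) : R := (mid_rate - k) * step'' (t - t1 - 5)
  + (k' - mid_rate) * step'' (t - t1 - 25).

Definition angle (t : R) : R := PI/2 * step (t - t1 - 3).
Definition angle' (t : R) : R := PI/2 * step' (t - t1 - 3).
Definition angle'' (t : R) : R := PI/2 * step'' (t - t1 - 3).
Definition angle''' (t : R) : R := PI/2 * step''' (t - t1 - 3).

Lemma is_derive_phase t : is_derive phase t (phase' t).
Proof. unfold phase, phase'; solve_derive. Qed.
Lemma is_derive_phase' t : is_derive phase' t (phase'' t).
Proof. unfold phase', phase''; solve_derive. Qed.
Lemma is_derive_phase'' t : is_derive phase'' t (phase''' t).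
Proof. unfold phase'', phase'''; solve_derive. Qed.
Lemma is_derive_angle t : is_derive angle t (angle' t).
Proof. unfold angle, angle'; solve_derive. Qed.
Lemma is_derive_angle' t : is_derive angle' t (angle'' t).
Proof. unfold angle', angle''; solve_derive. Qed.
Lemma is_derive_angle'' t : is_derive angle'' t (angle''' t).
Proof. unfold angle'', angle'''; solve_derive. Qed.
#[local] Hint Resolve is_derive_phase is_derive_phase' is_derive_phase''
  is_derive_angle is_derive_angle' is_derive_angle'' : derive.

Lemma ex_derive_phase''' t : ex_derive phase''' t.
Proof. unfold phase'''; auto_derive; repeat split; auto with derive. Qed.
#[local] Hint Resolve ex_derive_phase''' : derive.

Lemma continuous_angle''' t : continuous angle''' t.
Proof.
  apply (continuous_scal_r (V := R_NormedModule) (PI/2) (fun t => step''' (t - t1 - 3))).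
  apply (continuous_comp (fun t => t - t1 - 3) step''').
  - apply continuous_R_of_ex_derive; auto_derive; auto.
  - apply continuous_step'''.
Qed.

Variable c1 : R.

Definition amp_x (t : R) : R := c1 * exp (- phase t) * cos (angle t).
Definition amp_y (t : R) : R := c1 * exp (- phase t) * sin (angle t).
Definition amp_x' (t : R) : R :=
  c1 * exp (- phase t) * (- phase' t * cos (angle t) - angle' t * sin (angle t)).
Definition amp_y' (t : R) : R :=
  c1 * exp (- phase t) * (- phase' t * sin (angle t) + angle' t * cos (angle t)).

Definition sys_diag (t : R) : R := phase' t ^ 2 - phase'' t - angle' t ^ 2.
Definition sys_skew (t : R) : R := 2 * phase' t * angle' t - angle'' t.
Definition amp_x'' (t : R) : R := sys_diag t * amp_x t + sys_skew t * amp_y t.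
Definition amp_y'' (t : R) : R := sys_diag t * amp_y t - sys_skew t * amp_x t.

Lemma is_derive_amp_x t : is_derive amp_x t (amp_x' t).
Proof. unfold amp_x, amp_x'; solve_derive. Qed.
Lemma is_derive_amp_y t : is_derive amp_y t (amp_y' t).
Proof. unfold amp_y, amp_y'; solve_derive. Qed.
Lemma is_derive_amp_x' t : is_derive amp_x' t (amp_x'' t).
Proof. unfold amp_x'', amp_x', sys_diag, sys_skew, amp_x, amp_y; solve_derive. Qed.
Lemma is_derive_amp_y' t : is_derive amp_y' t (amp_y'' t).
Proof. unfold amp_y'', amp_y', sys_diag, sys_skew, amp_x, amp_y; solve_derive. Qed.
#[local] Hint Resolve is_derive_amp_x is_derive_amp_y is_derive_amp_x' is_derive_amp_y' : derive.

Lemma ex_derive_amp_x'' t : ex_derive amp_x'' t.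
Proof. unfold amp_x'', sys_diag, sys_skew; auto_derive; repeat split; auto with derive. Qed.
Lemma ex_derive_amp_y'' t : ex_derive amp_y'' t.
Proof. unfold amp_y'', sys_diag, sys_skew; auto_derive; repeat split; auto with derive. Qed.
#[local] Hint Resolve ex_derive_amp_x'' ex_derive_amp_y'' : derive.

Lemma phase_early t : t - t1 <= 5 -> phase t = k * t /\ phase' t = k /\ phase'' t = 0.
Proof.
  intros H; unfold phase, phase', phase''.
  rewrite !ramp_left, !step_left, !step'_out by lra; repeat split; ring.
Qed.

(* [mid_rate] is chosen so that the constant term is [k/2 - 5k'/6], as encoded in [c]:
   the two ramps contribute [-(11/2)(mid_rate - k) - (51/2)(k' - mid_rate)]. *)
Lemma phase_late t : 26 <= t - t1 ->
  phase t = k' * t + (k - k') * t1 + k/2 - 5 * k'/6 /\ phase' t = k' /\ phase'' t = 0.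
Proof.
  intros H; unfold phase, phase', phase'', mid_rate.
  rewrite !ramp_right, !step_right, !step'_out by lra; repeat split; field.
Qed.

Lemma angle_early t : t - t1 <= 3 -> angle t = 0 /\ angle' t = 0 /\ angle'' t = 0.
Proof.
  intros H; unfold angle, angle', angle''.
  rewrite step_left, step'_out, step''_out by lra; repeat split; ring.
Qed.

Lemma angle_late t : 4 <= t - t1 -> angle t = PI/2 /\ angle' t = 0 /\ angle'' t = 0.
Proof.
  intros H; unfold angle, angle', angle''.
  rewrite step_right, step'_out, step''_out by lra; repeat split; ring.
Qed.

Lemma amp_x_late t : 4 <= t - t1 -> amp_x t = 0 /\ amp_x' t = 0 /\ amp_x'' t = 0.
Proof.
  intros H; unfold amp_x'', amp_x', amp_x, amp_y, sys_skew.
  destruct (angle_late t H) as [-> [-> ->]]; rewrite cos_PI2; repeat split; ring.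
Qed.

Lemma rotation_at_rate_k t : (phase' t - k) * angle' t = 0.
Proof.
  destruct (Rle_dec (t - t1) 5) as [H | H].
  - destruct (phase_early t H) as [_ [-> _]]; ring.
  - destruct (angle_late t) as [_ [-> _]]; [lra | ring].
Qed.

Section Nondegenerate.
Hypotheses (k_neq0 : k <> 0) (k'_neq0 : k' <> 0).

Definition coupling (t : R) : R := 2 * k * angle' t - angle'' t.
Definition coupling' (t : R) : R := 2 * k * angle'' t - angle''' t.
Definition coef_a (t : R) : R := 1 - angle' t ^ 2 / k ^ 2.
Definition coef_a' (t : R) : R := - (2 * angle' t * angle'' t) / k ^ 2.
(* [coef_d] is 1 up to [t1 + 1] and [sys_diag / k'^2] from [t1 + 2] on; [amp_y]
   vanishes until [t1 + 3], so only the latter value enters the equation. *)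
Definition coef_d (t : R) : R :=
  1 + (k^2 / k'^2 - 1) * step (t - t1 - 1) + (sys_diag t - k^2) / k'^2.
Definition coef_d' (t : R) : R := (k^2 / k'^2 - 1) * step' (t - t1 - 1)
  + (2 * phase' t * phase'' t - phase''' t - 2 * angle' t * angle'' t) / k'^2.

Lemma is_derive_coupling t : is_derive coupling t (coupling' t).
Proof. unfold coupling, coupling'; solve_derive. Qed.
Lemma is_derive_coef_a t : is_derive coef_a t (coef_a' t).
Proof. unfold coef_a, coef_a'; solve_derive. Qed.
Lemma is_derive_coef_d t : is_derive coef_d t (coef_d' t).
Proof. unfold coef_d, coef_d', sys_diag; solve_derive. Qed.
Lemma ex_derive_coef_a' t : ex_derive coef_a' t.
Proof. unfold coef_a'; auto_derive; repeat split; auto with derive. Qed.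
Lemma ex_derive_coef_d' t : ex_derive coef_d' t.
Proof. unfold coef_d'; auto_derive; repeat split; auto with derive. Qed.
#[local] Hint Resolve is_derive_coupling is_derive_coef_a is_derive_coef_d
  ex_derive_coef_a' ex_derive_coef_d' : derive.

Lemma continuous_coupling' t : continuous coupling' t.
Proof.
  unfold coupling'.
  apply (continuous_minus (V := R_NormedModule) (fun t => 2 * k * angle'' t) angle''').
  - apply continuous_R_of_ex_derive; auto_derive; auto with derive.
  - apply continuous_angle'''.
Qed.

Lemma amp_x_ode t : amp_x'' t = k^2 * coef_a t * amp_x t + coupling t * amp_y t.
Proof.
  replace (amp_x'' t) with (k^2 * coef_a t * amp_x t + coupling t * amp_y t
    + (phase' t ^ 2 - phase'' t - k^2) * amp_x t + 2 * ((phase' t - k) * angle' t) * amp_y t)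
    by (unfold amp_x'', sys_diag, sys_skew, coef_a, coupling; field; auto).
  rewrite rotation_at_rate_k.
  destruct (Rle_dec (t - t1) 5) as [H | H].
  - destruct (phase_early t H) as [_ [-> ->]]; ring.
  - destruct (amp_x_late t) as [-> _]; [lra | ring].
Qed.

Lemma amp_y_ode t : amp_y'' t = k'^2 * coef_d t * amp_y t - coupling t * amp_x t.
Proof.
  replace (amp_y'' t) with (k'^2 * coef_d t * amp_y t - coupling t * amp_x t
    + (k^2 - k'^2) * (1 - step (t - t1 - 1)) * amp_y t - 2 * ((phase' t - k) * angle' t) * amp_x t)
    by (unfold amp_y'', coef_d, sys_diag, sys_skew, coupling; field; auto).
  rewrite rotation_at_rate_k.
  destruct (Rle_dec (t - t1) 3) as [H | H].
  - unfold amp_y; destruct (angle_early t H) as [-> _]; rewrite sin_0; ring.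
  - rewrite step_right by lra; ring.
Qed.

Ltac solve_cont1 :=
  lazymatch goal with
  | |- continuous (fun t => coupling' t) _ => apply continuous_coupling'
  | |- continuous (fun _ => ?c) _ => apply continuous_const
  | |- continuous (fun t => @?f t / ?c) _ =>
      apply (continuous_mult (K := R_AbsRing) f (fun _ => / c)); [solve_cont1 | apply continuous_const]
  | |- continuous (fun t => @?f t * @?g t) _ =>
      apply (continuous_mult (K := R_AbsRing) f g); solve_cont1
  | |- continuous (fun t => @?f t - @?g t) _ =>
      apply (continuous_minus (V := R_NormedModule) f g); solve_cont1
  | |- continuous (fun t => - @?f t) _ =>
      apply (continuous_opp (V := R_NormedModule) f); solve_cont1
  end.

(* Only [coupling'] (through [step''']) is continuous without being differentiable. *)
Ltac solve_cont_leaf :=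
  lazymatch goal with
  | |- context [coupling'] => solve_cont1
  | |- _ => apply continuous_R_of_ex_derive; auto_derive; repeat split; auto with derive
  end.

Ltac solve_cont3 :=
  repeat match goal with
  | |- cont3 (fun _ _ _ => ?c) => apply (cont3_const c)
  | |- cont3 (fun _ _ t => @?h t) => apply (cont3_t h); intro
  | |- cont3 (fun x _ _ => @?h x) => apply (cont3_x h); intro
  | |- cont3 (fun _ y _ => @?h y) => apply (cont3_y h); intro
  | |- cont3 (fun x y t => @?F x y t + @?G x y t) => apply (cont3_plus F G)
  | |- cont3 (fun x y t => @?F x y t - @?G x y t) => apply (cont3_minus F G)
  | |- cont3 (fun x y t => @?F x y t * @?G x y t) => apply (cont3_mult F G)
  | |- cont3 (fun x y t => - @?F x y t) => apply (cont3_opp F)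
  end;
  try solve_cont_leaf.

Ltac solve_C1_with :=
  split; [intros x y t; cbv beta; split; [| split]; solve_derive | repeat split; solve_cont3].

Definition u_field : field3 := fun x y t => amp_x t * cos (k * x) + amp_y t * cos (k' * y).
Definition u_x : field3 := fun x _ t => - k * amp_x t * sin (k * x).
Definition u_y : field3 := fun _ y t => - k' * amp_y t * sin (k' * y).
Definition u_t : field3 := fun x y t => amp_x' t * cos (k * x) + amp_y' t * cos (k' * y).

Lemma C1_with_u : C1_with u_field u_x u_y u_t.
Proof. unfold u_field, u_x, u_y, u_t; solve_C1_with. Qed.

Lemma C1_with_u_x : C1_with u_x (fun x _ t => - k * k * amp_x t * cos (k * x))
  (fun _ _ _ => 0) (fun x _ t => - k * amp_x' t * sin (k * x)).
Proof. unfold u_x; solve_C1_with. Qed.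

Lemma C1_with_u_y : C1_with u_y (fun _ _ _ => 0)
  (fun _ y t => - k' * k' * amp_y t * cos (k' * y)) (fun _ y t => - k' * amp_y' t * sin (k' * y)).
Proof. unfold u_y; solve_C1_with. Qed.

Lemma C1_with_u_t : C1_with u_t (fun x _ t => - k * amp_x' t * sin (k * x))
  (fun _ y t => - k' * amp_y' t * sin (k' * y))
  (fun x y t => amp_x'' t * cos (k * x) + amp_y'' t * cos (k' * y)).
Proof. unfold u_t; solve_C1_with. Qed.

Lemma C2_u : C2_3 u_field.
Proof.
  pose proof C1_with_u as Hu.
  split; [| split; [| split]]; eapply C1_with_C1_3.
  - exact Hu.
  - exact (C1_with_ext _ _ _ _ C1_with_u_x _ (C1_with_dx _ _ _ _ Hu)).
  - exact (C1_with_ext _ _ _ _ C1_with_u_y _ (C1_with_dy _ _ _ _ Hu)).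
  - exact (C1_with_ext _ _ _ _ C1_with_u_t _ (C1_with_dt _ _ _ _ Hu)).
Qed.

(* With this matrix, [div (coef_mat grad u_field)] equals
   [-(k^2 coef_a amp_x + coupling amp_y) cos(k x) - (k'^2 coef_d amp_y - coupling amp_x) cos(k' y)]:
   its antisymmetric part produces the coupling terms, and the symmetric
   [cos cos] corrections cancel the remaining products through [sin^2 + cos^2 = 1]. *)
Definition coef11 : field3 := fun x y t =>
  coef_a t - coupling t / k^2 * (cos (k * x) * cos (k' * y)).
Definition coef12 : field3 := fun x y t =>
  2 * coupling t / (k * k') * (sin (k * x) * sin (k' * y)).
Definition coef21 : field3 := fun x y t =>
  - (2 * coupling t / (k * k')) * (sin (k * x) * sin (k' * y)).
Definition coef22 : field3 := fun x y t =>
  coef_d t + coupling t / k'^2 * (cos (k * x) * cos (k' * y)).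
Definition coef_mat : matfield := MatField coef11 coef12 coef21 coef22.

Lemma C1_with_coef11 : C1_with coef11
  (fun x y t => coupling t / k^2 * (k * sin (k * x) * cos (k' * y)))
  (fun x y t => coupling t / k^2 * (k' * cos (k * x) * sin (k' * y)))
  (fun x y t => coef_a' t - coupling' t / k^2 * (cos (k * x) * cos (k' * y))).
Proof. unfold coef11; solve_C1_with. Qed.

Lemma C1_with_coef12 : C1_with coef12
  (fun x y t => 2 * coupling t / (k * k') * (k * cos (k * x) * sin (k' * y)))
  (fun x y t => 2 * coupling t / (k * k') * (k' * sin (k * x) * cos (k' * y)))
  (fun x y t => 2 * coupling' t / (k * k') * (sin (k * x) * sin (k' * y))).
Proof. unfold coef12; solve_C1_with. Qed.

Lemma C1_with_coef21 : C1_with coef21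
  (fun x y t => - (2 * coupling t / (k * k')) * (k * cos (k * x) * sin (k' * y)))
  (fun x y t => - (2 * coupling t / (k * k')) * (k' * sin (k * x) * cos (k' * y)))
  (fun x y t => - (2 * coupling' t / (k * k')) * (sin (k * x) * sin (k' * y))).
Proof. unfold coef21; solve_C1_with. Qed.

Lemma C1_with_coef22 : C1_with coef22
  (fun x y t => - (coupling t / k'^2 * (k * sin (k * x) * cos (k' * y))))
  (fun x y t => - (coupling t / k'^2 * (k' * cos (k * x) * sin (k' * y))))
  (fun x y t => coef_d' t + coupling' t / k'^2 * (cos (k * x) * cos (k' * y))).
Proof. unfold coef22; solve_C1_with. Qed.

Lemma mat_C1_coef_mat : mat_C1 coef_mat.
Proof.
  split; [| split; [| split]]; eapply C1_with_C1_3;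
    [apply C1_with_coef11 | apply C1_with_coef12 | apply C1_with_coef21 | apply C1_with_coef22].
Qed.

Lemma solves_coef_mat : solves_eq coef_mat u_field.
Proof.
  intros x y t; simpl.
  rewrite (dt_ext _ _ (C1_with_dt _ _ _ _ C1_with_u)), (C1_with_dt _ _ _ _ C1_with_u_t).
  rewrite (dx_ext _ (fun x y t => coef11 x y t * u_x x y t + coef12 x y t * u_y x y t)),
    (dy_ext _ (fun x y t => coef21 x y t * u_x x y t + coef22 x y t * u_y x y t))
    by (intros; now rewrite (C1_with_dx _ _ _ _ C1_with_u), (C1_with_dy _ _ _ _ C1_with_u)).
  set (cX := cos (k * x)); set (sX := sin (k * x)); set (cY := cos (k' * y)); set (sY := sin (k' * y)).
  set (W := coupling t); set (f := amp_x t); set (g := amp_y t).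
  assert (Dx : dx (fun x y t => coef11 x y t * u_x x y t + coef12 x y t * u_y x y t) x y t
    = - k^2 * coef_a t * f * cX + W * f * cY * (cX^2 - sX^2) - 2 * W * g * cX * sY^2).
  { apply is_derive_unique; unfold coef11, coef12, u_x, u_y; auto_derive; [easy |].
    subst cX sX cY sY W f g; field; auto. }
  assert (Dy : dy (fun x y t => coef21 x y t * u_x x y t + coef22 x y t * u_y x y t) x y t
    = 2 * W * f * sX^2 * cY - k'^2 * coef_d t * g * cY - W * g * cX * (cY^2 - sY^2)).
  { apply is_derive_unique; unfold coef21, coef22, u_x, u_y; auto_derive; [easy |].
    subst cX sX cY sY W f g; field; auto. }
  assert (TX : sX^2 = 1 - cX^2) by (subst sX cX; pose proof (sin2_cos2 (k * x)); unfold Rsqr in *; lra).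
  assert (TY : sY^2 = 1 - cY^2) by (subst sY cY; pose proof (sin2_cos2 (k' * y)); unfold Rsqr in *; lra).
  rewrite Dx, Dy, amp_x_ode, amp_y_ode, TX, TY; fold W f g; ring.
Qed.

Lemma initial_mode x y t : t - t1 <= 1 ->
  u_field x y t = c1 * cos (k * x) * exp (- k * t) /\ is_Id_at coef_mat x y t.
Proof.
  intros H; split.
  - unfold u_field, amp_x, amp_y.
    destruct (angle_early t) as [-> _]; [lra |]; destruct (phase_early t) as [-> _]; [lra |].
    rewrite cos_0, sin_0; replace (- (k * t)) with (- k * t) by ring; ring.
  - unfold is_Id_at; simpl; unfold coef11, coef12, coef21, coef22, coef_a, coupling, coef_d, sys_diag.
    destruct (angle_early t) as [_ [-> ->]]; [lra |]; destruct (phase_early t) as [_ [-> ->]]; [lra |].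
    rewrite step_left by lra; repeat split; field; auto.
Qed.

Lemma target_amplitude c2 :
  c1 * exp (- k / 2 + 5 * k' / 6) * exp (- k * t1) = c2 * exp (- k' * t1) ->
  c2 = c1 * exp (- k / 2 + 5 * k' / 6 + (k' - k) * t1).
Proof.
  intros E; apply Rmult_eq_reg_r with (exp (- k' * t1)); [| apply Rgt_not_eq, exp_pos].
  rewrite <- E, !Rmult_assoc, <- !exp_plus; do 2 f_equal; ring.
Qed.

Lemma target_mode c2 x y t : 26 <= t - t1 ->
  c1 * exp (- k / 2 + 5 * k' / 6) * exp (- k * t1) = c2 * exp (- k' * t1) ->
  u_field x y t = c2 * cos (k' * y) * exp (- k' * t) /\ is_Id_at coef_mat x y t.
Proof.
  intros H E; split.
  - unfold u_field, amp_x, amp_y; rewrite (target_amplitude c2 E).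
    destruct (angle_late t) as [-> _]; [lra |]; rewrite cos_PI2, sin_PI2.
    replace (- phase t) with (- k / 2 + 5 * k' / 6 + (k' - k) * t1 + - k' * t)
      by (destruct (phase_late t H) as [-> _]; field).
    rewrite exp_plus; ring.
  - unfold is_Id_at; simpl; unfold coef11, coef12, coef21, coef22, coef_a, coupling, coef_d, sys_diag.
    destruct (angle_late t) as [_ [-> ->]]; [lra |]; destruct (phase_late t H) as [_ [-> ->]].
    rewrite step_right by lra; repeat split; field; auto.
Qed.

(** ** Estimates *)

Section Estimates.
Hypotheses (k_large : 10000 <= k) (k_lt_k' : k < k') (k'_le_2k : k' <= 2 * k).

Lemma angle'_bounds t : 0 <= angle' t <= 6.
Proof.
  unfold angle'; pose proof (step'_bounds (t - t1 - 3)); pose proof PI_RGT_0; pose proof PI_4; nra.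
Qed.

Lemma angle''_bound t : Rabs (angle'' t) <= 60.
Proof.
  unfold angle''; pose proof (step''_bound (t - t1 - 3)) as H; pose proof PI_RGT_0; pose proof PI_4.
  apply Rabs_le_between in H; apply Rabs_le_between; split; nra.
Qed.

Lemma angle'''_bound t : Rabs (angle''' t) <= 40000.
Proof.
  unfold angle'''; pose proof (step'''_bound (t - t1 - 3)) as H; pose proof PI_RGT_0; pose proof PI_4.
  apply Rabs_le_between in H; apply Rabs_le_between; split; nra.
Qed.

Lemma mid_rate_bounds : - k' / 60 <= mid_rate - k <= k' /\ - k' / 4 <= k' - mid_rate <= k' / 60.
Proof. unfold mid_rate; lra. Qed.

Lemma phase'_bounds t : k' / 2 <= phase' t <= 3 * k'.
Proof.
  pose proof mid_rate_bounds; unfold phase', mid_rate in *.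
  pose proof (step_bounds (t - t1 - 5)); pose proof (step_bounds (t - t1 - 25)).
  split; [| nra].
  destruct (Rle_dec (t - t1) 25).
  - rewrite (step_left (t - t1 - 25)) by lra; nra.
  - rewrite (step_right (t - t1 - 5)) by lra; nra.
Qed.

Lemma phase''_bound t : Rabs (phase'' t) <= 4 * k'.
Proof.
  pose proof mid_rate_bounds; unfold phase''.
  pose proof (step'_bounds (t - t1 - 5)); pose proof (step'_bounds (t - t1 - 25)).
  apply Rabs_le_between; split; nra.
Qed.

Lemma phase'''_bound t : Rabs (phase''' t) <= 40 * k'.
Proof.
  pose proof mid_rate_bounds; unfold phase'''.
  pose proof (step''_bound (t - t1 - 5)) as A; pose proof (step''_bound (t - t1 - 25)) as B.
  apply Rabs_le_between in A, B; apply Rabs_le_between; split; nra.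
Qed.

Lemma coupling_bound t : Rabs (coupling t) <= 13 * k.
Proof.
  unfold coupling; pose proof (angle'_bounds t); pose proof (angle''_bound t) as A.
  apply Rabs_le_between in A; apply Rabs_le_between; split; nra.
Qed.

Lemma coupling'_bound t : Rabs (coupling' t) <= k^2 / 2.
Proof.
  unfold coupling'; pose proof (angle''_bound t) as A; pose proof (angle'''_bound t) as B.
  apply Rabs_le_between in A, B; apply Rabs_le_between; split; nra.
Qed.

Lemma coef_d_bounds t : 6/25 <= coef_d t <= 11.
Proof.
  assert (E : coef_d t * k'^2 = k'^2 + (k^2 - k'^2) * step (t - t1 - 1)
                + phase' t ^ 2 - phase'' t - angle' t ^ 2 - k^2)
    by (unfold coef_d, sys_diag; field; auto).
  pose proof (step_bounds (t - t1 - 1)); pose proof (angle'_bounds t); pose proof (phase'_bounds t).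
  pose proof (phase''_bound t) as P2; apply Rabs_le_between in P2.
  assert (k^2 <= k'^2) by nra; assert (100000000 <= k'^2) by nra.
  assert (angle' t ^ 2 <= 36) by nra.
  cut (6/25 * k'^2 <= coef_d t * k'^2 <= 11 * k'^2); [intros; split; nra |].
  rewrite E; split.
  - destruct (Rle_dec (t - t1) 5).
    + destruct (phase_early t) as [_ [-> ->]]; [lra |].
      assert (0 <= (k'^2 - k^2) * (1 - step (t - t1 - 1))) by (apply Rmult_le_pos; lra).
      nra.
    + rewrite step_right by lra; nra.
  - assert (0 <= (k'^2 - k^2) * step (t - t1 - 1)) by (apply Rmult_le_pos; lra).
    nra.
Qed.

Lemma coef11_bounds x y t : 99/100 <= coef11 x y t <= 101/100.
Proof.
  unfold coef11, coef_a; pose proof (angle'_bounds t).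
  assert (B : Rabs (coupling t / k^2 * (cos (k * x) * cos (k' * y))) <= 1/200).
  { apply Rabs_mult_le_unit2; try apply Rabs_cos_le_1.
    apply Rabs_div_le; [nra |]; pose proof (coupling_bound t); nra. }
  apply Rabs_le_between in B.
  assert (0 <= angle' t ^ 2 / k^2 <= 1/200).
  { split; [apply Rdiv_le_0_compat; nra |].
    apply Rmult_le_reg_r with (k^2); [nra |]; field_simplify; nra. }
  lra.
Qed.

Lemma coef22_bounds x y t : 1/5 <= coef22 x y t <= 12.
Proof.
  unfold coef22; pose proof (coef_d_bounds t).
  assert (B : Rabs (coupling t / k'^2 * (cos (k * x) * cos (k' * y))) <= 1/200).
  { apply Rabs_mult_le_unit2; try apply Rabs_cos_le_1.
    apply Rabs_div_le; [nra |]; pose proof (coupling_bound t); nra. }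
  apply Rabs_le_between in B; lra.
Qed.

(* The off-diagonal entries are opposite, so only the diagonal enters the quadratic form. *)
Lemma coef_mat_elliptic x y t xi1 xi2 :
  / 80 * (xi1 ^ 2 + xi2 ^ 2) <= quad coef_mat x y t xi1 xi2 <= 80 * (xi1 ^ 2 + xi2 ^ 2).
Proof.
  unfold quad; simpl.
  replace (coef21 x y t) with (- coef12 x y t) by (unfold coef21, coef12; ring).
  pose proof (coef11_bounds x y t); pose proof (coef22_bounds x y t).
  pose proof (pow2_ge_0 xi1); pose proof (pow2_ge_0 xi2).
  split; nra.
Qed.

Lemma coef_a'_bound t : Rabs (coef_a' t) <= 1/2.
Proof.
  unfold coef_a'; apply Rabs_div_le; [nra |].
  pose proof (angle'_bounds t); pose proof (angle''_bound t) as A; apply Rabs_le_between in A.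
  apply Rabs_le_between; split; nra.
Qed.

Lemma coef_d'_bound t : Rabs (coef_d' t) <= 28.
Proof.
  unfold coef_d'; eapply Rle_trans; [apply Rabs_triang |].
  assert (A : Rabs ((k^2 / k'^2 - 1) * step' (t - t1 - 1)) <= 3).
  { rewrite Rabs_mult; pose proof (step'_bounds (t - t1 - 1)).
    assert (Rabs (k^2 / k'^2 - 1) <= 1).
    { assert (0 <= k^2 / k'^2 <= 1).
      { split; [apply Rdiv_le_0_compat; nra |].
        apply Rmult_le_reg_r with (k'^2); [nra |]; field_simplify; nra. }
      apply Rabs_le_between; lra. }
    rewrite (Rabs_right (step' _)) by lra; pose proof (Rabs_pos (k^2 / k'^2 - 1)); nra. }
  assert (B : Rabs ((2 * phase' t * phase'' t - phase''' t - 2 * angle' t * angle'' t) / k'^2) <= 25).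
  { apply Rabs_div_le; [nra |].
    pose proof (phase'_bounds t); pose proof (angle'_bounds t).
    pose proof (phase''_bound t) as P2; pose proof (phase'''_bound t) as P3.
    pose proof (angle''_bound t) as T2.
    apply Rabs_le_between in P2, P3, T2.
    assert (- 24 * k'^2 <= 2 * phase' t * phase'' t <= 24 * k'^2) by (split; nra).
    assert (- 360 <= angle' t * angle'' t <= 360) by (split; nra).
    apply Rabs_le_between; split; nra. }
  lra.
Qed.

Lemma bounded_partials_coef11 : bounded_partials coef11 60.
Proof.
  intros x y t.
  rewrite (C1_with_dx _ _ _ _ C1_with_coef11), (C1_with_dy _ _ _ _ C1_with_coef11),
    (C1_with_dt _ _ _ _ C1_with_coef11).
  pose proof (coupling_bound t); split; [| split].
  - replace (coupling t / k^2 * (k * sin (k * x) * cos (k' * y)))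
      with (coupling t / k * (sin (k * x) * cos (k' * y))) by (field; auto).
    apply Rabs_mult_le_unit2; [apply Rabs_div_le; nra | apply Rabs_sin_le_1 | apply Rabs_cos_le_1].
  - replace (coupling t / k^2 * (k' * cos (k * x) * sin (k' * y)))
      with (coupling t * k' / k^2 * (cos (k * x) * sin (k' * y))) by (field; auto).
    apply Rabs_mult_le_unit2; [| apply Rabs_cos_le_1 | apply Rabs_sin_le_1].
    apply Rabs_div_le; [nra |].
    rewrite Rabs_mult, (Rabs_right k') by lra; pose proof (Rabs_pos (coupling t)); nra.
  - eapply Rle_trans; [unfold Rminus; apply Rabs_triang |]; rewrite Rabs_Ropp.
    pose proof (coef_a'_bound t).
    assert (Rabs (coupling' t / k^2 * (cos (k * x) * cos (k' * y))) <= 1/2).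
    { apply Rabs_mult_le_unit2; [| apply Rabs_cos_le_1 | apply Rabs_cos_le_1].
      apply Rabs_div_le; [nra |]; pose proof (coupling'_bound t); nra. }
    lra.
Qed.

Lemma bounded_partials_coef12 : bounded_partials coef12 60.
Proof.
  intros x y t.
  rewrite (C1_with_dx _ _ _ _ C1_with_coef12), (C1_with_dy _ _ _ _ C1_with_coef12),
    (C1_with_dt _ _ _ _ C1_with_coef12).
  pose proof (coupling_bound t); split; [| split].
  - replace (2 * coupling t / (k * k') * (k * cos (k * x) * sin (k' * y)))
      with (2 * coupling t / k' * (cos (k * x) * sin (k' * y))) by (field; auto).
    apply Rabs_mult_le_unit2; [| apply Rabs_cos_le_1 | apply Rabs_sin_le_1].
    apply Rabs_div_le; [lra |]; rewrite Rabs_mult, (Rabs_right 2) by lra; nra.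
  - replace (2 * coupling t / (k * k') * (k' * sin (k * x) * cos (k' * y)))
      with (2 * coupling t / k * (sin (k * x) * cos (k' * y))) by (field; auto).
    apply Rabs_mult_le_unit2; [| apply Rabs_sin_le_1 | apply Rabs_cos_le_1].
    apply Rabs_div_le; [lra |]; rewrite Rabs_mult, (Rabs_right 2) by lra; nra.
  - apply Rabs_mult_le_unit2; [| apply Rabs_sin_le_1 | apply Rabs_sin_le_1].
    apply Rabs_div_le; [nra |]; rewrite Rabs_mult, (Rabs_right 2) by lra.
    pose proof (coupling'_bound t); nra.
Qed.

Lemma bounded_partials_coef21 : bounded_partials coef21 60.
Proof.
  intros x y t.
  pose proof (bounded_partials_coef12 x y t) as B.
  rewrite (C1_with_dx _ _ _ _ C1_with_coef12), (C1_with_dy _ _ _ _ C1_with_coef12),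
    (C1_with_dt _ _ _ _ C1_with_coef12) in B.
  rewrite (C1_with_dx _ _ _ _ C1_with_coef21), (C1_with_dy _ _ _ _ C1_with_coef21),
    (C1_with_dt _ _ _ _ C1_with_coef21).
  rewrite !Ropp_mult_distr_l_reverse, !Rabs_Ropp; exact B.
Qed.

Lemma bounded_partials_coef22 : bounded_partials coef22 60.
Proof.
  intros x y t.
  rewrite (C1_with_dx _ _ _ _ C1_with_coef22), (C1_with_dy _ _ _ _ C1_with_coef22),
    (C1_with_dt _ _ _ _ C1_with_coef22), !Rabs_Ropp.
  pose proof (coupling_bound t); split; [| split].
  - replace (coupling t / k'^2 * (k * sin (k * x) * cos (k' * y)))
      with (coupling t * k / k'^2 * (sin (k * x) * cos (k' * y))) by (field; auto).
    apply Rabs_mult_le_unit2; [| apply Rabs_sin_le_1 | apply Rabs_cos_le_1].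
    apply Rabs_div_le; [nra |].
    rewrite Rabs_mult, (Rabs_right k) by lra; pose proof (Rabs_pos (coupling t)); nra.
  - replace (coupling t / k'^2 * (k' * cos (k * x) * sin (k' * y)))
      with (coupling t / k' * (cos (k * x) * sin (k' * y))) by (field; auto).
    apply Rabs_mult_le_unit2; [apply Rabs_div_le; nra | apply Rabs_cos_le_1 | apply Rabs_sin_le_1].
  - eapply Rle_trans; [apply Rabs_triang |].
    pose proof (coef_d'_bound t).
    assert (Rabs (coupling' t / k'^2 * (cos (k * x) * cos (k' * y))) <= 1/2).
    { apply Rabs_mult_le_unit2; [| apply Rabs_cos_le_1 | apply Rabs_cos_le_1].
      apply Rabs_div_le; [nra |]; pose proof (coupling'_bound t); nra. }
    lra.
Qed.

Lemma reg_class_coef_mat : reg_class 80 60 coef_mat.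
Proof.
  split; [exact coef_mat_elliptic |]; split; [exact mat_C1_coef_mat |].
  exact (conj bounded_partials_coef11 (conj bounded_partials_coef12
           (conj bounded_partials_coef21 bounded_partials_coef22))).
Qed.

Lemma C2_1_amp_x : C2_1 amp_x.
Proof. apply (C2_1_of_is_derive _ amp_x' amp_x''); auto with derive; intros; solve_cont_leaf. Qed.
Lemma C2_1_amp_y : C2_1 amp_y.
Proof. apply (C2_1_of_is_derive _ amp_y' amp_y''); auto with derive; intros; solve_cont_leaf. Qed.

Lemma amp_derivs_bound (a : nat) t : (a <= 2)%nat -> 0 <= c1 ->
  Rabs (Derive_n amp_x a t) <= 10 * k'^a * (c1 * exp (- phase t)) /\
  Rabs (Derive_n amp_y a t) <= 10 * k'^a * (c1 * exp (- phase t)).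
Proof.
  intros Ha Hc.
  set (E := c1 * exp (- phase t)).
  assert (HE : 0 <= E) by (pose proof (exp_pos (- phase t)); unfold E; nra).
  pose proof (phase'_bounds t); pose proof (angle'_bounds t).
  pose proof (phase''_bound t) as P2; pose proof (angle''_bound t) as T2; apply Rabs_le_between in P2, T2.
  pose proof (COS_bound (angle t)); pose proof (SIN_bound (angle t)).
  destruct (Derive_n_of_is_derive _ _ _ is_derive_amp_x is_derive_amp_x' t) as [Dx1 Dx2].
  destruct (Derive_n_of_is_derive _ _ _ is_derive_amp_y is_derive_amp_y' t) as [Dy1 Dy2].
  rewrite Rmult_comm; destruct a as [| [| [| a]]]; [| rewrite Dx1, Dy1 | rewrite Dx2, Dy2 | lia]; simpl.
  - unfold amp_x, amp_y; fold E; split; apply Rabs_mult_nonneg_le; auto;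
      apply Rabs_le_between; lra.
  - unfold amp_x', amp_y'; fold E.
    split; apply Rabs_mult_nonneg_le; auto; apply Rabs_le_between; split; nra.
  - unfold amp_x'', amp_y'', amp_x, amp_y; fold E.
    assert (Q : Rabs (sys_diag t) <= 9 * k'^2 + 4 * k' + 36)
      by (unfold sys_diag; apply Rabs_le_between; split; nra).
    assert (W : Rabs (sys_skew t) <= 36 * k' + 60)
      by (unfold sys_skew; apply Rabs_le_between; split; nra).
    pose proof (Rabs_sin_le_1 (angle t)); pose proof (Rabs_cos_le_1 (angle t)).
    pose proof (Rabs_pos (sys_diag t)); pose proof (Rabs_pos (sys_skew t)).
    split; [replace (sys_diag t * (E * cos (angle t)) + sys_skew t * (E * sin (angle t)))
              with (E * (sys_diag t * cos (angle t) + sys_skew t * sin (angle t))) by ring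
           | replace (sys_diag t * (E * sin (angle t)) - sys_skew t * (E * cos (angle t)))
              with (E * (sys_diag t * sin (angle t) + - sys_skew t * cos (angle t))) by ring];
      apply Rabs_mult_nonneg_le; auto;
      eapply Rle_trans; try apply Rabs_triang; rewrite ?Rabs_mult, ?Rabs_Ropp; nra.
Qed.

Lemma phase_lower t : t1 <= t -> k * t1 + k' / 2 * (t - t1) <= phase t.
Proof.
  intros [Ht | <-].
  - destruct (MVT_cor3 phase phase' t1 t Ht) as [c [_ [_ ->]]].
    { intros z _ _; apply is_derive_Reals, is_derive_phase. }
    destruct (phase_early t1) as [-> _]; [lra |].
    pose proof (phase'_bounds c); nra.
  - destruct (phase_early t1) as [-> _]; lra.
Qed.

Lemma envelope_bound c2 t : 0 < c1 -> t1 <= t ->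
  c1 * exp (- k / 2 + 5 * k' / 6) * exp (- k * t1) = c2 * exp (- k' * t1) ->
  c1 * exp (- phase t) <= c2 * exp (- k' * t / 3) * exp (- 2 * k' * t1 / 3).
Proof.
  intros Hc Ht E.
  rewrite (target_amplitude c2 E), !Rmult_assoc, <- !exp_plus.
  apply Rmult_le_compat_l; [lra |]; apply exp_le_compat.
  pose proof (phase_lower t Ht); nra.
Qed.

Lemma amp_x_derivs_bound (a : nat) t : (a <= 2)%nat -> 0 < c1 ->
  Rabs (Derive_n amp_x a t) <= 1000 * c1 * Rpower k (7 * INR a / 3) * exp (- k * t).
Proof.
  intros Ha Hc.
  destruct (Rle_dec (t - t1) 5) as [H | H].
  - destruct (amp_derivs_bound a t Ha) as [B _]; [lra |].
    destruct (phase_early t H) as [Ph _].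
    rewrite Ph in B; replace (- (k * t)) with (- k * t) in B by ring.
    assert (Hk : k' ^ a <= 4 * k ^ a).
    { destruct a as [| [| [| a]]]; simpl; [lra | lra | nra | lia]. }
    assert (Hp : k ^ a <= Rpower k (7 * INR a / 3)).
    { rewrite <- Rpower_pow by lra; apply Rle_Rpower; [lra |]; pose proof (pos_INR a); lra. }
    assert (HE : 0 < c1 * exp (- k * t)) by (apply Rmult_lt_0_compat; [easy | apply exp_pos]).
    pose proof (pow_le k a ltac:(lra)).
    eapply Rle_trans; [exact B |].
    replace (1000 * c1 * Rpower k (7 * INR a / 3) * exp (- k * t))
      with (1000 * Rpower k (7 * INR a / 3) * (c1 * exp (- k * t))) by ring.
    apply Rmult_le_compat_r; [lra | nra].
  - assert (Z : Derive_n amp_x a t = 0).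
    { destruct (Derive_n_of_is_derive _ _ _ is_derive_amp_x is_derive_amp_x' t) as [D1 D2].
      destruct (amp_x_late t) as [Z0 [Z1 Z2]]; [lra |].
      destruct a as [| [| [| a]]]; [exact Z0 | now rewrite D1 | now rewrite D2 | lia]. }
    rewrite Z, Rabs_R0.
    assert (0 < Rpower k (7 * INR a / 3)) by (unfold Rpower; apply exp_pos).
    pose proof (exp_pos (- k * t)).
    apply Rlt_le; repeat apply Rmult_lt_0_compat; lra.
Qed.

Lemma amp_y_derivs_bound c2 (a : nat) t : (a <= 2)%nat -> 0 < c1 -> t1 <= t ->
  c1 * exp (- k / 2 + 5 * k' / 6) * exp (- k * t1) = c2 * exp (- k' * t1) ->
  Rabs (Derive_n amp_y a t) <= 1000 * c2 * k' ^ a * exp (- k' * t / 3) * exp (- 2 * k' * t1 / 3).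
Proof.
  intros Ha Hc Ht E.
  destruct (amp_derivs_bound a t Ha) as [_ B]; [lra |].
  pose proof (envelope_bound c2 t Hc Ht E) as Env.
  assert (0 <= k' ^ a) by (apply pow_le; lra).
  assert (0 <= c1 * exp (- phase t)) by (pose proof (exp_pos (- phase t)); nra).
  eapply Rle_trans; [exact B |]; nra.
Qed.

End Estimates.
End Nondegenerate.
End Construction.

Lemma cos_mul_periodic (n : Z) x : (0 <= n)%Z -> cos (IZR n * (x + 2 * PI)) = cos (IZR n * x).
Proof.
  intros Hn; rewrite <- (Z2Nat.id n Hn), <- INR_IZR_INZ.
  replace (INR (Z.to_nat n) * (x + 2 * PI))
    with (INR (Z.to_nat n) * x + 2 * INR (Z.to_nat n) * PI) by ring.
  apply cos_period.
Qed.

Lemma sin_mul_periodic (n : Z) x : (0 <= n)%Z -> sin (IZR n * (x + 2 * PI)) = sin (IZR n * x).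
Proof.
  intros Hn; rewrite <- (Z2Nat.id n Hn), <- INR_IZR_INZ.
  replace (INR (Z.to_nat n) * (x + 2 * PI))
    with (INR (Z.to_nat n) * x + 2 * INR (Z.to_nat n) * PI) by ring.
  apply sin_period.
Qed.

Lemma periodic_u_field (n n' : Z) t1 c1 : (0 <= n)%Z -> (0 <= n')%Z ->
  periodic_xy (u_field (IZR n) (IZR n') t1 c1).
Proof. intros Hn Hn' x y t; unfold u_field; now rewrite !cos_mul_periodic. Qed.

Lemma periodic_coef_mat (n n' : Z) t1 : (0 <= n)%Z -> (0 <= n')%Z ->
  mat_periodic (coef_mat (IZR n) (IZR n') t1).
Proof.
  intros Hn Hn'; unfold mat_periodic; simpl; unfold coef11, coef12, coef21, coef22.
  repeat split; intros; now rewrite ?cos_mul_periodic, ?sin_mul_periodic.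
Qed.

Theorem mainTheorem8 :
  exists C K M : R, 2 <= C /\
  forall (k k' : Z) (t1 c1 : R),
    K <= IZR k -> (k < k')%Z -> (k' <= 2 * k)%Z -> 0 <= t1 -> 0 < c1 ->
    let c := exp (- IZR k / 2 + 5 * IZR k' / 6) in
    forall c2 : R, 0 < c2 ->
    c1 * c * exp (- IZR k * t1) = c2 * exp (- IZR k' * t1) ->
    exists (u : field3) (A : matfield) (f g : R -> R),
      transforms (fun x y t => c1 * cos (IZR k * x) * exp (- IZR k * t))
                 (fun x y t => c2 * cos (IZR k' * y) * exp (- IZR k' * t))
                 t1 (t1 + C) A u /\
      reg_class 80 60 A /\
      C2_1 f /\ C2_1 g /\
      (forall x y t, t1 <= t <= t1 + C ->
         u x y t = f t * cos (IZR k * x) + g t * cos (IZR k' * y)) /\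
      (forall (a : nat) (t : R), (a <= 2)%nat -> t1 <= t <= t1 + C ->
         Rabs (Derive_n f a t)
           <= M * c1 * Rpower (IZR k) (7 * INR a / 3) * exp (- IZR k * t) /\
         Rabs (Derive_n g a t)
           <= M * c2 * IZR k' ^ a * exp (- IZR k' * t / 3)
              * exp (- 2 * IZR k' * t1 / 3)) /\
      (forall x y t, t1 <= t <= t1 + / 100 ->
         u x y t = c1 * cos (IZR k * x) * exp (- IZR k * t) /\ is_Id_at A x y t) /\
      (forall x y t, t1 + C - / 100 <= t <= t1 + C ->
         u x y t = c2 * cos (IZR k' * y) * exp (- IZR k' * t) /\ is_Id_at A x y t).
Proof.
  exists 27, 10000, 1000; split; [lra |].
  intros k k' t1 c1 Hk Hkk' Hk'k Ht1 Hc1 c c2 Hc2 E; unfold c in E.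
  apply IZR_lt in Hkk'; apply IZR_le in Hk'k; rewrite mult_IZR in Hk'k.
  assert (Hn : (0 <= k)%Z) by (apply le_IZR; lra).
  assert (Hn' : (0 <= k')%Z) by (apply le_IZR; lra).
  assert (Hk0 : IZR k <> 0) by lra; assert (Hk'0 : IZR k' <> 0) by lra.
  exists (u_field (IZR k) (IZR k') t1 c1), (coef_mat (IZR k) (IZR k') t1),
    (amp_x (IZR k) (IZR k') t1 c1), (amp_y (IZR k) (IZR k') t1 c1).
  pose proof (fun x y t H => initial_mode (IZR k) (IZR k') t1 c1 Hk0 Hk'0 x y t H) as Init.
  pose proof (fun x y t H => target_mode (IZR k) (IZR k') t1 c1 Hk0 Hk'0 c2 x y t H E) as Target.
  refine (conj (conj _ (conj _ (conj _ (conj _ (conj _ (conj _ _))))))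
            (conj _ (conj _ (conj _ (conj _ (conj _ (conj _ _))))))).
  - now apply periodic_u_field.
  - now apply periodic_coef_mat.
  - now apply C2_u.
  - now apply mat_C1_coef_mat.
  - now apply solves_coef_mat.
  - intros x y t H; apply Init; lra.
  - intros x y t H; apply Target; lra.
  - now apply reg_class_coef_mat.
  - now apply C2_1_amp_x.
  - now apply C2_1_amp_y.
  - easy.
  - intros a t Ha Ht; split.
    + now apply amp_x_derivs_bound.
    + apply amp_y_derivs_bound; auto; lra.
  - intros x y t H; apply Init; lra.
  - intros x y t H; apply Target; lra.
Qed.
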